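(* Let $\mathcal R$ be a graded commutative 2-ring and let $(R,G,\pi,\{g_\gamma\},\{\varphi_x\})$ be a tightening of $\mathcal R$. Then restriction $\mathcal I\mapsto\mathrm r(\mathcal I)$ and extension $I\mapsto\mathrm e(I)$ are mutually inverse inclusion-preserving bijections between homogeneous ideals of $\mathcal R$ and homogeneous ideals of $R$, and they restrict to a homeomorphism $\operatorname{Spec}^h(R)\cong\operatorname{Spc}(\mathcal R)$.
   Context: A graded commutative 2-ring $\mathcal R$ is an essentially small preadditive symmetric monoidal category (tensor additive in each variable) in which all objects are invertible; its grading 2-group $\mathcal G$ is its groupoid of objects and isomorphisms, and $K_0(\mathcal G)$ is the group of isomorphism classes. A morphism $\tilde r$ is a translate of $r$ if $\tilde r=v\circ(g\otimes r)\circ u$ for an object $g$ and isomorphisms $u,v$. A homogeneous ideal of $\mathcal R$ is a two-sided ideal of morphisms closed under tensoring with objects; prime: proper and $s\circ r\in\mathfrak p\Rightarrow s\in\mathfrak p$ or $r\in\mathfrak p$; $\operatorname{Spc}(\mathcal R)$ is the set of primes with Zariski topology. For an abelian group $G$ (written multiplicatively), a $G$-graded commutative ring is a ring $R=\bigoplus_{x\in G}R_x$ with $1\in R_1$, $R_xR_y\subseteq R_{xy}$, and a function $\tau\colon G\times G\to Z(R)_1^\times$ that is symmetric, bilinear, and satisfies $rs=\tau(|r|,|s|)sr$ for homogeneous $r,s$; $\operatorname{Spec}^h(R)$ is its space of homogeneous primes with Zariski topology. A tightening consists of such an $R$, a surjective homomorphism $\pi\colon G\to K_0(\mathcal G)$,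 representatives $g_\gamma$ for $\gamma\in K_0(\mathcal G)$ with $g_1=\mathbb 1$, and group isomorphisms $\varphi_x\colon R_x\to\mathcal R(\mathbb 1,g_{\pi(x)})$ such that: (1) $\varphi_x(rs)=\varphi_x(r)\circ\varphi_1(s)$ for $s\in R_1$, $r\in R_x$; (2) for $r\in R_x$, $s\in R_y$, the morphism $(\varphi_x(r)\otimes g_{\pi(y)})\circ\varphi_y(s)$ (with implicit unitor) is a translate of $\varphi_{xy}(rs)$. Write $\varphi=\bigsqcup_x\varphi_x$ on homogeneous elements. For a homogeneous ideal $\mathcal I$ of $\mathcal R$, $\mathrm r(\mathcal I)$ is the additive closure in $R$ of $\varphi^{-1}(\mathcal I)$; for a homogeneous ideal $I$ of $R$, $\mathrm e(I)$ is the homogeneous ideal of $\mathcal R$ generated by $\varphi$ of the homogeneous elements of $I$. *)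

From mathcomp Require Import all_boot all_algebra.
Set Implicit Arguments.
Unset Strict Implicit.
Unset Printing Implicit Defensive.
Import GRing.Theory.
Local Open Scope ring_scope.

(* Raw data of a preadditive symmetric monoidal category. *)
Record cat2data := Cat2Data {
  Ob : Type;
  Mor : Ob -> Ob -> zmodType;
  idm : forall a, Mor a a;
  comp : forall a b c, Mor b c -> Mor a b -> Mor a c;
  tens : Ob -> Ob -> Ob;
  tensm : forall a b c d, Mor a b -> Mor c d -> Mor (tens a c) (tens b d);
  unito : Ob;
  alpha : forall a b c, Mor (tens (tens a b) c) (tens a (tens b c));
  lam : forall a, Mor (tens unito a) a;
  lami : forall a, Mor a (tens unito a);
  rho : forall a, Mor (tens a unito) a;
  beta : forall a b, Mor (tens a b) (tens b a)
}.

Arguments idm {_} _.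
Arguments comp {_ _ _ _} _ _.
Arguments tens {_} _ _.
Arguments tensm {_ _ _ _ _} _ _.
Arguments unito {_}.
Arguments alpha {_} _ _ _.
Arguments lam {_} _.
Arguments lami {_} _.
Arguments rho {_} _.
Arguments beta {_} _ _.

Declare Scope cat_scope.
Delimit Scope cat_scope with cat.
Notation "f \oc g" := (comp f g) (at level 40, left associativity) : cat_scope.
Notation "f \ot g" := (tensm f g) (at level 35, no associativity) : cat_scope.
Notation "a \otO b" := (tens a b) (at level 35, no associativity) : cat_scope.
Local Open Scope cat_scope.

Definition isIso (C : cat2data) (a b : Ob C) (f : Mor a b) : Prop :=
  exists g : Mor b a, g \oc f = idm a /\ f \oc g = idm b.

Record cat2axioms (C : cat2data) : Prop := {
  comp_assoc : forall (a b c d : Ob C) (f : Mor a b) (g : Mor b c) (h : Mor c d),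
      h \oc (g \oc f) = (h \oc g) \oc f;
  comp_id_l : forall (a b : Ob C) (f : Mor a b), idm b \oc f = f;
  comp_id_r : forall (a b : Ob C) (f : Mor a b), f \oc idm a = f;
  comp_addl : forall (a b c : Ob C) (g g' : Mor b c) (f : Mor a b),
      (g + g') \oc f = g \oc f + g' \oc f;
  comp_addr : forall (a b c : Ob C) (g : Mor b c) (f f' : Mor a b),
      g \oc (f + f') = g \oc f + g \oc f';
  tens_id : forall a b : Ob C, idm a \ot idm b = idm (a \otO b);
  tens_comp : forall (a b c a' b' c' : Ob C) (f : Mor a b) (g : Mor b c)
      (f' : Mor a' b') (g' : Mor b' c'),
      (g \oc f) \ot (g' \oc f') = (g \ot g') \oc (f \ot f');
  tens_addl : forall (a b c d : Ob C) (f f' : Mor a b) (g : Mor c d),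
      (f + f') \ot g = f \ot g + f' \ot g;
  tens_addr : forall (a b c d : Ob C) (f : Mor a b) (g g' : Mor c d),
      f \ot (g + g') = f \ot g + f \ot g';
  alpha_iso : forall a b c : Ob C, isIso (alpha a b c);
  lam_lami : forall a : Ob C, lam a \oc lami a = idm a;
  lami_lam : forall a : Ob C, lami a \oc lam a = idm (unito \otO a);
  rho_iso : forall a : Ob C, isIso (rho a);
  alpha_nat : forall (a b c a' b' c' : Ob C) (f : Mor a a') (g : Mor b b') (h : Mor c c'),
      alpha a' b' c' \oc ((f \ot g) \ot h) = (f \ot (g \ot h)) \oc alpha a b c;
  lam_nat : forall (a b : Ob C) (f : Mor a b),
      lam b \oc (idm unito \ot f) = f \oc lam a;
  rho_nat : forall (a b : Ob C) (f : Mor a b),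
      rho b \oc (f \ot idm unito) = f \oc rho a;
  beta_nat : forall (a b a' b' : Ob C) (f : Mor a a') (g : Mor b b'),
      beta a' b' \oc (f \ot g) = (g \ot f) \oc beta a b;
  pentagon : forall a b c d : Ob C,
      alpha a b (c \otO d) \oc alpha (a \otO b) c d
      = (idm a \ot alpha b c d) \oc alpha a (b \otO c) d \oc (alpha a b c \ot idm d);
  triangle : forall a b : Ob C,
      (idm a \ot lam b) \oc alpha a unito b = rho a \ot idm b;
  hexagon : forall a b c : Ob C,
      alpha b c a \oc beta a (b \otO c) \oc alpha a b c
      = (idm b \ot beta a c) \oc alpha b a c \oc (beta a b \ot idm c);
  symmetry : forall a b : Ob C, beta b a \oc beta a b = idm (a \otO b);
  all_invertible : forall a : Ob C, exists b : Ob C, exists f : Mor (a \otO b) unito, isIso f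
}.

Record twoRing := TwoRing { tr_data :> cat2data; tr_ax : cat2axioms tr_data }.

Definition translate (C : cat2data) (a b c d : Ob C) (r : Mor a b) (t : Mor c d) : Prop :=
  exists (h : Ob C) (u : Mor c (h \otO a)) (v : Mor (h \otO b) d),
    [/\ isIso u, isIso v & t = v \oc (idm h \ot r) \oc u].

(* K_0 of the grading 2-group: isomorphism classes of objects *)
Definition isoclass (C : cat2data) (a : Ob C) : Ob C -> Prop :=
  fun b => exists f : Mor a b, isIso f.
Definition K0 (C : cat2data) : Type := {P : Ob C -> Prop | exists a, P = isoclass a}.
Definition cls (C : cat2data) (a : Ob C) : K0 C :=
  exist _ (isoclass a) (ex_intro _ a erefl).

Definition MorPred (C : cat2data) := forall a b : Ob C, Mor a b -> Prop.

Definition morIncl (C : cat2data) (I J : MorPred C) : Prop :=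
  forall (a b : Ob C) (f : Mor a b), I a b f -> J a b f.

Definition isHomIdealC (C : cat2data) (I : MorPred C) : Prop :=
  [/\ (forall a b : Ob C, I a b 0),
      (forall (a b : Ob C) (f g : Mor a b), I a b f -> I a b g -> I a b (f - g)),
      (forall (a b c : Ob C) (f : Mor a b) (g : Mor b c), I a b f -> I a c (g \oc f)),
      (forall (a b c : Ob C) (f : Mor a b) (g : Mor b c), I b c g -> I a c (g \oc f))
    & (forall (h a b : Ob C) (f : Mor a b),
          I a b f -> I _ _ (idm h \ot f) /\ I _ _ (f \ot idm h))].

Definition isPrimeC (C : cat2data) (p : MorPred C) : Prop :=
  [/\ isHomIdealC p,
      (exists (a b : Ob C) (f : Mor a b), ~ p a b f)
    & (forall (a b c : Ob C) (f : Mor a b) (g : Mor b c),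
          p a c (g \oc f) -> p b c g \/ p a b f)].

Definition Spc (C : cat2data) : Type := {p : MorPred C | isPrimeC p}.

Inductive gen_open (X : Type) (B : (X -> Prop) -> Prop) : (X -> Prop) -> Prop :=
| go_basic : forall Z, B Z -> gen_open B (fun x => ~ Z x)
| go_top : gen_open B (fun _ => True)
| go_inter : forall U V, gen_open B U -> gen_open B V -> gen_open B (fun x => U x /\ V x)
| go_union : forall F : (X -> Prop) -> Prop,
    (forall U, F U -> gen_open B U) -> gen_open B (fun x => exists U, F U /\ U x)
| go_ext : forall U V, (forall x, U x <-> V x) -> gen_open B U -> gen_open B V.

Definition continuous_gen (X Y : Type) (BX : (X -> Prop) -> Prop)
    (BY : (Y -> Prop) -> Prop) (f : X -> Y) : Prop :=
  forall U, gen_open BY U -> gen_open BX (fun x => U (f x)).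

Definition zariskiC (C : cat2data) (Z : Spc C -> Prop) : Prop :=
  exists S : MorPred C, forall P : Spc C, Z P <-> morIncl S (proj1_sig P).

Definition homog (G : zmodType) (R : pzRingType) (Rx : G -> R -> Prop) (r : R) : Prop :=
  exists x, Rx x r.

Definition gradedComRing (G : zmodType) (R : pzRingType) (Rx : G -> R -> Prop)
    (tau : G -> G -> R) : Prop :=
  [/\
      (forall x, Rx x 0) /\ (forall x r s, Rx x r -> Rx x s -> Rx x (r - s)),
      Rx 0 1 /\ (forall x y r s, Rx x r -> Rx y s -> Rx (x + y) (r * s)),
      (* R is the internal direct sum of the R_x *)
      (forall r : R, exists (s : seq G) (f : G -> R),
          [/\ uniq s, (forall x, Rx x (f x)) & r = \sum_(x <- s) f x])
      /\ (forall (s : seq G) (f : G -> R), uniq s -> (forall x, Rx x (f x)) ->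
            \sum_(x <- s) f x = 0 -> forall x, x \in s -> f x = 0),
      (forall x y, [/\ Rx 0 (tau x y), (forall r, tau x y * r = r * tau x y) &
          exists u, [/\ Rx 0 u, (forall r, u * r = r * u), u * tau x y = 1 & tau x y * u = 1]])
      /\ (forall x y, tau x y = tau y x)
      /\ (forall x y z, tau (x + y) z = tau x z * tau y z)
      /\ (forall x y z, tau x (y + z) = tau x y * tau x z)
    &
      forall x y r s, Rx x r -> Rx y s -> r * s = tau x y * (s * r)].

Definition isHomIdealR (G : zmodType) (R : pzRingType) (Rx : G -> R -> Prop)
    (I : R -> Prop) : Prop :=
  [/\ I 0, (forall r s, I r -> I s -> I (r - s)),
      (forall a r, I r -> I (a * r)), (forall a r, I r -> I (r * a))
    & (forall r, I r -> exists (n : nat) (f : 'I_n -> R),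
          (forall i, homog Rx (f i) /\ I (f i)) /\ r = \sum_(i < n) f i)].

Definition isHomPrimeR (G : zmodType) (R : pzRingType) (Rx : G -> R -> Prop)
    (p : R -> Prop) : Prop :=
  [/\ isHomIdealR Rx p, (exists r, ~ p r)
    & (forall r s, homog Rx r -> homog Rx s -> p (r * s) -> p r \/ p s)].

Definition SpecH (G : zmodType) (R : pzRingType) (Rx : G -> R -> Prop) : Type :=
  {p : R -> Prop | isHomPrimeR Rx p}.

Definition zariskiR (G : zmodType) (R : pzRingType) (Rx : G -> R -> Prop)
    (Z : SpecH Rx -> Prop) : Prop :=
  exists S : R -> Prop, forall P : SpecH Rx, Z P <-> (forall r, S r -> proj1_sig P r).

Definition tightening (C : cat2data) (G : zmodType) (R : pzRingType)
    (Rx : G -> R -> Prop) (pi : G -> K0 C) (g : K0 C -> Ob C)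
    (phi : forall x : G, R -> Mor unito (g (pi x))) : Prop :=
  [/\
      (forall x y, pi (x + y) = cls (g (pi x) \otO g (pi y)))
      /\ (forall gam : K0 C, exists x, pi x = gam),
      (forall gam : K0 C, cls (g gam) = gam) /\ g (cls unito) = unito,
      (forall x r s, Rx x r -> Rx x s -> phi x (r + s) = phi x r + phi x s)
      /\ (forall x r s, Rx x r -> Rx x s -> phi x r = phi x s -> r = s)
      /\ (forall x (f : Mor unito (g (pi x))), exists r, Rx x r /\ phi x r = f),
      (* condition (1); e : g_{pi 0} = unit identifies Mor(1, g_{pi 0}) with Mor(1,1) *)
      (forall (e : g (pi 0) = unito) x r s, Rx x r -> Rx 0 s ->
          phi x (r * s) = phi x r \oc eq_rect _ (fun o => Mor unito o) (phi 0 s) _ e)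
    &
      (forall x y r s, Rx x r -> Rx y s ->
          translate (phi (x + y) (r * s))
            ((phi x r \ot idm (g (pi y))) \oc lami (g (pi y)) \oc phi y s))].

Definition rI (C : cat2data) (G : zmodType) (R : pzRingType) (Rx : G -> R -> Prop)
    (pi : G -> K0 C) (g : K0 C -> Ob C) (phi : forall x : G, R -> Mor unito (g (pi x)))
    (I : MorPred C) : R -> Prop :=
  fun r => exists (n : nat) (f : 'I_n -> R) (xs : 'I_n -> G),
      (forall i, Rx (xs i) (f i) /\ I _ _ (phi (xs i) (f i))) /\ r = \sum_(i < n) f i.

Definition eI (C : cat2data) (G : zmodType) (R : pzRingType) (Rx : G -> R -> Prop)
    (pi : G -> K0 C) (g : K0 C -> Ob C) (phi : forall x : G, R -> Mor unito (g (pi x)))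
    (I : R -> Prop) : MorPred C :=
  fun a b f => forall J : MorPred C, isHomIdealC J ->
      (forall x r, Rx x r -> I r -> J _ _ (phi x r)) -> J a b f.

(* Every object h is invertible, so - ⊗ h is fully faithful; since π is onto, every morphism
   lies in exactly the same homogeneous ideals as some φ_y(q) : 1 → g_{π y}, and a composite
   s ∘ t lies in the same ideals as φ(r q), where t and s correspond to q and r. Condition (2)
   of a tightening turns a product r s, up to translation, into (φ(r) ⊗ 1) ∘ φ(s); condition (1),
   together with the fact that every endomorphism of g acts on Mor(1, g) through an endomorphism
   of 1, turns precomposition with endomorphisms of 1 into right multiplication by elements of
   degree 0. Hence r(𝓘) is an ideal and e(r(𝓘)) = 𝓘. Conversely, the morphisms t all of whose
   sandwiches v ∘ (h ⊗ t) ∘ u : 1 → g_{π x} are φ_x of elements of I form a homogeneous ideal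
   containing φ(I), so φ_x(r) ∈ e(I) forces r ∈ I, whence r(e(I)) = I. Primes correspond because
   products correspond to composites, and both maps are continuous because the preimage of a
   basic closed set V(S) is again one. *)

From mathcomp Require Import all_boot all_algebra.
From Stdlib Require Import ClassicalEpsilon FunctionalExtensionality PropExtensionality Classical.
Set Implicit Arguments.
Unset Strict Implicit.
Unset Printing Implicit Defensive.
Import GRing.Theory.
Local Open Scope ring_scope.
Local Open Scope cat_scope.

Lemma morph_add0 (U V : zmodType) (f : U -> V) : {morph f : x y / x + y} -> f 0 = 0.
Proof. by move=> fD; apply: (addrI (f 0)); rewrite -fD !addr0. Qed.

Lemma morph_addN (U V : zmodType) (f : U -> V) :
  {morph f : x y / x + y} -> {morph f : x / - x}.
Proof. by move=> fD x; apply/eqP; rewrite -addr_eq0 -fD addNr (morph_add0 fD). Qed.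

Lemma morph_addB (U V : zmodType) (f : U -> V) :
  {morph f : x y / x + y} -> {morph f : x y / x - y}.
Proof. by move=> fD x y; rewrite fD (morph_addN fD). Qed.

Section Basics.
Variable C : twoRing.
Local Notation ax := (tr_ax C).

Lemma compA (a b c d : Ob C) (f : Mor a b) (g : Mor b c) (h : Mor c d) :
  h \oc (g \oc f) = h \oc g \oc f.
Proof. exact: (comp_assoc ax). Qed.

Lemma comp1m (a b : Ob C) (f : Mor a b) : idm b \oc f = f.
Proof. exact: (comp_id_l ax). Qed.

Lemma compm1 (a b : Ob C) (f : Mor a b) : f \oc idm a = f.
Proof. exact: (comp_id_r ax). Qed.

Lemma tensmM (a b c a' b' c' : Ob C) (f : Mor a b) (g : Mor b c)
    (f' : Mor a' b') (g' : Mor b' c') :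
  (g \oc f) \ot (g' \oc f') = (g \ot g') \oc (f \ot f').
Proof. exact: (tens_comp ax). Qed.

Lemma tensm11 (a b : Ob C) : idm a \ot idm b = idm (a \otO b).
Proof. exact: (tens_id ax). Qed.

Lemma tensm1M (h a b c : Ob C) (f : Mor a b) (f' : Mor b c) :
  idm h \ot (f' \oc f) = (idm h \ot f') \oc (idm h \ot f).
Proof. by rewrite -tensmM comp1m. Qed.

Lemma comp0l (a b c : Ob C) (f : Mor a b) : (0 : Mor b c) \oc f = 0.
Proof. exact: (@morph_add0 (Mor b c) _ _ (fun g g' => comp_addl ax g g' f)). Qed.

Lemma comp0r (a b c : Ob C) (g : Mor b c) : g \oc (0 : Mor a b) = 0.
Proof. exact: (morph_add0 (comp_addr ax g)). Qed.

Lemma compBl (a b c : Ob C) (g g' : Mor b c) (f : Mor a b) :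
  (g - g') \oc f = g \oc f - g' \oc f.
Proof. exact: (@morph_addB (Mor b c) _ _ (fun g g' => comp_addl ax g g' f)). Qed.

Lemma compBr (a b c : Ob C) (g : Mor b c) (f f' : Mor a b) :
  g \oc (f - f') = g \oc f - g \oc f'.
Proof. exact: (morph_addB (comp_addr ax g)). Qed.

Lemma tensm0r (a b c d : Ob C) (f : Mor a b) : f \ot (0 : Mor c d) = 0.
Proof. exact: (morph_add0 (tens_addr ax f)). Qed.

Lemma tensmBr (a b c d : Ob C) (f : Mor a b) (g g' : Mor c d) :
  f \ot (g - g') = f \ot g - f \ot g'.
Proof. exact: (morph_addB (tens_addr ax f)). Qed.

Lemma iso_idm (a : Ob C) : isIso (idm a).
Proof. by exists (idm a); rewrite comp1m. Qed.

Lemma iso_comp (a b c : Ob C) (f : Mor a b) (g : Mor b c) :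
  isIso f -> isIso g -> isIso (g \oc f).
Proof.
move=> [f' [ff' f'f]] [g' [gg' g'g]]; exists (f' \oc g'); split.
  by rewrite compA -(compA g) gg' compm1.
by rewrite compA -(compA f') f'f compm1.
Qed.

Lemma iso_tensm (a b c d : Ob C) (f : Mor a b) (g : Mor c d) :
  isIso f -> isIso g -> isIso (f \ot g).
Proof.
move=> [f' [ff' f'f]] [g' [gg' g'g]].
by exists (f' \ot g'); rewrite -!tensmM ff' f'f gg' g'g !tensm11.
Qed.

Lemma iso_lam (a : Ob C) : isIso (lam a).
Proof. by exists (lami a); rewrite (lam_lami ax) (lami_lam ax). Qed.

Lemma iso_lami (a : Ob C) : isIso (lami a).
Proof. by exists (lam a); rewrite (lam_lami ax) (lami_lam ax). Qed.

Lemma lami_nat (a b : Ob C) (f : Mor a b) :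
  lami b \oc f = (idm unito \ot f) \oc lami a.
Proof.
rewrite -[lami b \oc f]compm1 -(lam_lami ax a) compA -(compA (lam a)).
by rewrite -(lam_nat ax) compA (lami_lam ax) comp1m.
Qed.

End Basics.

Section TensorFullyFaithful.
Variable C : twoRing.
Local Notation ax := (tr_ax C).

Lemma tensr_inverse_nat (h : Ob C) :
  exists (h' : Ob C) (u : forall X : Ob C, Mor ((X \otO h) \otO h') X),
    (forall X, isIso (u X)) /\
    (forall X Y (f : Mor X Y), u Y \oc ((f \ot idm h) \ot idm h') = f \oc u X).
Proof.
have [h' [w w_iso]] := all_invertible ax h.
exists h', (fun X => rho X \oc (idm X \ot w) \oc alpha X h h'); split=> [X|X Y f].
  apply: iso_comp; first exact: (alpha_iso ax).
  by apply: iso_comp; [exact: iso_tensm (iso_idm _) w_iso | exact: (rho_iso ax)].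
rewrite -compA (alpha_nat ax) tensm11 compA -(compA (f \ot idm (h \otO h'))).
rewrite -tensmM comp1m compm1.
have -> : f \ot w = (f \ot idm unito) \oc (idm X \ot w) by rewrite -tensmM comp1m compm1.
by rewrite !compA (rho_nat ax).
Qed.

Lemma tensm1_inj (h X Y : Ob C) (f f' : Mor X Y) : f \ot idm h = f' \ot idm h -> f = f'.
Proof.
have [h' [u [u_iso u_nat]]] := tensr_inverse_nat h.
have [e [_ eK]] := u_iso X.
have fE (k : Mor X Y) : k = u Y \oc ((k \ot idm h) \ot idm h') \oc e.
  by rewrite u_nat -compA eK compm1.
by move=> ff'; rewrite (fE f) (fE f') ff'.
Qed.

Lemma tensm1_surj (h X Y : Ob C) (F : Mor (X \otO h) (Y \otO h)) :
  exists f : Mor X Y, f \ot idm h = F.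
Proof.
have [h' [u [u_iso u_nat]]] := tensr_inverse_nat h.
have [eX [eX1 _]] := u_iso X.
have [eY [eY1 _]] := u_iso Y.
exists (u Y \oc (F \ot idm h') \oc eX); apply: (@tensm1_inj h').
have tens2E (f : Mor X Y) : (f \ot idm h) \ot idm h' = eY \oc (f \oc u X).
  by rewrite -u_nat compA eY1 comp1m.
by rewrite tens2E -!compA eX1 compm1 !compA eY1 comp1m.
Qed.

End TensorFullyFaithful.

Section UnitMorphisms.
Variable C : twoRing.
Local Notation ax := (tr_ax C).

Lemma endo_unit (h : Ob C) (xi : Mor h h) :
  exists mu : Mor unito unito, forall t : Mor unito h, xi \oc t = t \oc mu.
Proof.
have [mu0 mu0E] := tensm1_surj (lami h \oc xi \oc lam h).
exists (lam unito \oc (mu0 \ot idm unito) \oc lami unito) => t.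
have -> : xi = lam h \oc (mu0 \ot idm h) \oc lami h.
  by rewrite mu0E !compA (lam_lami ax) comp1m -compA (lam_lami ax) compm1.
rewrite -!compA lami_nat.
have -> : (mu0 \ot idm h) \oc ((idm unito \ot t) \oc lami unito)
    = (idm unito \ot t) \oc ((mu0 \ot idm unito) \oc lami unito).
  by rewrite !compA -!tensmM !comp1m !compm1.
by rewrite compA (lam_nat ax) !compA.
Qed.

Lemma sandwich_unit (H Y Z : Ob C) (t : Mor unito Y) (u : Mor unito (H \otO unito))
    (v : Mor (H \otO Y) Z) :
  exists (th : Mor Y Z) (nu : Mor unito unito),
    [/\ isIso nu, v \oc (idm H \ot t) \oc u = th \oc t \oc nu
      & isIso u -> isIso v -> isIso th].
Proof.
have [ri [ri1 ri2]] := rho_iso ax unito.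
have [rHi [rHi1 rHi2]] := rho_iso ax H.
exists (v \oc ((rho H \oc u) \ot idm Y) \oc lami Y), (lam unito \oc ri); split.
- by apply: iso_comp; [exists (rho unito) | exact: iso_lam].
- have uE : u = ((rho H \oc u) \ot idm unito) \oc ri.
    transitivity (rHi \oc (rho H \oc ((rho H \oc u) \ot idm unito)) \oc ri).
      by rewrite (rho_nat ax) -!compA ri2 compm1 !compA rHi1 comp1m.
    by rewrite compA rHi1 comp1m.
  rewrite {1}uE -compA.
  have -> : (idm H \ot t) \oc (((rho H \oc u) \ot idm unito) \oc ri)
      = ((rho H \oc u) \ot idm Y) \oc ((idm unito \ot t) \oc ri).
    by rewrite !compA -!tensmM !comp1m !compm1.
  have -> : idm unito \ot t = lami Y \oc t \oc lam unito.
    by rewrite -compA -(lam_nat ax) compA (lami_lam ax) comp1m.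
  by rewrite !compA.
- move=> u_iso v_iso; apply: iso_comp; first exact: iso_lami.
  apply: iso_comp v_iso; apply: iso_tensm (iso_idm _).
  by apply: iso_comp u_iso _; exists rHi.
Qed.

Lemma translate_unitE (Y Z : Ob C) (r : Mor unito Y) (t : Mor unito Z) :
  translate r t -> exists (th : Mor Y Z) (nu : Mor unito unito),
    [/\ isIso th, isIso nu & t = th \oc r \oc nu].
Proof.
move=> [H [u [v [u_iso v_iso ->]]]].
have [th [nu [nu_iso -> th_iso]]] := sandwich_unit r u v.
by exists th, nu; split=> //; apply: th_iso.
Qed.

End UnitMorphisms.

(** * Homogeneous ideals of morphisms *)

Section HomIdealC.
Variables (C : twoRing) (J : MorPred C).
Hypothesis J_ideal : isHomIdealC J.

Lemma idealC0 (a b : Ob C) : J (0 : Mor a b).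
Proof. by case: J_ideal. Qed.

Lemma idealCB (a b : Ob C) (f f' : Mor a b) : J f -> J f' -> J (f - f').
Proof. by case: J_ideal => _ JB _ _ _; apply: JB. Qed.

Lemma idealCD (a b : Ob C) (f f' : Mor a b) : J f -> J f' -> J (f + f').
Proof.
move=> Jf Jf'; have := idealCB Jf (idealCB (idealC0 a b) Jf').
by rewrite sub0r opprK.
Qed.

Lemma idealCN (a b : Ob C) (f : Mor a b) : J f -> J (- f).
Proof. by move=> Jf; have := idealCB (idealC0 a b) Jf; rewrite sub0r. Qed.

Lemma idealC_sum (a b : Ob C) (I : Type) (s : seq I) (P : pred I) (F : I -> Mor a b) :
  (forall i, P i -> J (F i)) -> J (\sum_(i <- s | P i) F i).
Proof. by move=> JF; apply: big_ind => //; [apply: idealC0 | apply: idealCD]. Qed.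

Lemma idealC_compl (a b c : Ob C) (f : Mor a b) (g : Mor b c) : J f -> J (g \oc f).
Proof. by case: J_ideal => _ _ Jl _ _; apply: Jl. Qed.

Lemma idealC_compr (a b c : Ob C) (f : Mor a b) (g : Mor b c) : J g -> J (g \oc f).
Proof. by case: J_ideal => _ _ _ Jr _; apply: Jr. Qed.

Lemma idealC_tensl (h a b : Ob C) (f : Mor a b) : J f -> J (idm h \ot f).
Proof. by case: J_ideal => _ _ _ _ Jt /(Jt h) []. Qed.

Lemma idealC_tensr (h a b : Ob C) (f : Mor a b) : J f -> J (f \ot idm h).
Proof. by case: J_ideal => _ _ _ _ Jt /(Jt h) []. Qed.

Lemma idealC_tensr_cancel (h a b : Ob C) (f : Mor a b) : J (f \ot idm h) -> J f.
Proof.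
have [h' [u [u_iso u_nat]]] := tensr_inverse_nat h.
have [e [_ eK]] := u_iso a.
move=> Jfh; rewrite -[f]compm1 -eK compA -u_nat.
by apply: idealC_compr; apply: idealC_compl; apply: idealC_tensr.
Qed.

End HomIdealC.

Definition same_ideals (C : twoRing) (a b a' b' : Ob C) (f : Mor a b) (f' : Mor a' b') :=
  forall J : MorPred C, isHomIdealC J -> J _ _ f <-> J _ _ f'.

Section SameIdeals.
Variable C : twoRing.

Lemma same_ideals_sym (a b a' b' : Ob C) (f : Mor a b) (f' : Mor a' b') :
  same_ideals f f' -> same_ideals f' f.
Proof. by move=> ff' J J_ideal; rewrite (ff' J J_ideal). Qed.

Lemma same_ideals_trans (a b a' b' a'' b'' : Ob C) (f : Mor a b) (f' : Mor a' b')
    (f'' : Mor a'' b'') :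
  same_ideals f f' -> same_ideals f' f'' -> same_ideals f f''.
Proof. by move=> ff' f'f'' J J_ideal; rewrite (ff' J J_ideal) (f'f'' J J_ideal). Qed.

Lemma same_ideals_isol (a b c : Ob C) (f : Mor a b) (v : Mor b c) :
  isIso v -> same_ideals (v \oc f) f.
Proof.
move=> [v' [v'v _]] J J_ideal; split; last exact: idealC_compl.
by move=> /(idealC_compl J_ideal v'); rewrite compA v'v comp1m.
Qed.

Lemma same_ideals_isor (a b c : Ob C) (f : Mor b c) (u : Mor a b) :
  isIso u -> same_ideals (f \oc u) f.
Proof.
move=> [u' [_ uu']] J J_ideal; split; last exact: idealC_compr.
by move=> /(idealC_compr J_ideal u'); rewrite -compA uu' compm1.
Qed.

Lemma same_ideals_tensm1 (h a b : Ob C) (f : Mor a b) : same_ideals (f \ot idm h) f.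
Proof.
move=> J J_ideal; split; [exact: idealC_tensr_cancel | exact: idealC_tensr].
Qed.

Lemma same_ideals_translate (Y Z : Ob C) (r : Mor unito Y) (t : Mor unito Z) :
  translate r t -> same_ideals t r.
Proof.
move=> /translate_unitE [th [nu [th_iso nu_iso ->]]].
apply: same_ideals_trans (same_ideals_isor _ nu_iso) _; exact: same_ideals_isol.
Qed.

End SameIdeals.

Lemma sig_inj (A : Type) (P : A -> Prop) (u v : {a : A | P a}) :
  proj1_sig u = proj1_sig v -> u = v.
Proof. by apply: eq_sig_hprop => a p q; exact: proof_irrelevance. Qed.

Lemma morIncl_antisym (C : twoRing) (I J : MorPred C) : morIncl I J -> morIncl J I -> I = J.
Proof.
move=> IJ JI; do 3!apply: functional_extensionality_dep => ?.
by apply: propositional_extensionality; split; [apply: IJ | apply: JI].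
Qed.

Lemma subpred_antisym (T : Type) (I J : T -> Prop) :
  (forall t, I t -> J t) -> (forall t, J t -> I t) -> I = J.
Proof.
move=> IJ JI; apply: functional_extensionality => t.
by apply: propositional_extensionality; split; [apply: IJ | apply: JI].
Qed.

Lemma cls_eq_iso (C : twoRing) (a b : Ob C) : cls a = cls b -> exists f : Mor a b, isIso f.
Proof.
move=> /(f_equal (@proj1_sig _ _)) /= ab.
have : isoclass b b by exists (idm b); apply: iso_idm.
by rewrite -ab.
Qed.

Lemma iso_cls_eq (C : twoRing) (a b : Ob C) (f : Mor a b) : isIso f -> cls a = cls b.
Proof.
move=> [f' [f'f ff']]; apply: sig_inj => /=.
apply: functional_extensionality => c; apply: propositional_extensionality.
split=> [[k k_iso]|[k k_iso]].
  by exists (k \oc f'); apply: iso_comp k_iso; exists f.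
by exists (k \oc f); apply: iso_comp k_iso; exists f'.
Qed.

Lemma continuous_gen_basic (X Y : Type) (BX : (X -> Prop) -> Prop)
    (BY : (Y -> Prop) -> Prop) (f : X -> Y) :
  (forall Z, BY Z -> BX (fun x => Z (f x))) -> continuous_gen BX BY f.
Proof.
move=> fB U; elim=> {U} [Z /fB BZ|||F _ IH|U V UV _ IH].
- exact: go_basic BZ.
- exact: go_top.
- by move=> U V _ IHU _ IHV; apply: go_inter.
- apply: (@go_ext _ _ (fun x => exists V, (exists U, F U /\ V = (fun x => U (f x))) /\ V x)).
    move=> x; split=> [[V [[U [FU ->]] Ufx]]|[U [FU Ufx]]]; first by exists U.
    by exists (fun x => U (f x)); split=> //; exists U.
  by apply: go_union => V [U [FU ->]]; apply: IH.
- by apply: go_ext IH => x; apply: UV.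
Qed.

(** * Homogeneous components *)

Definition hcomp (G : zmodType) (R : pzRingType) (n : nat) (f : 'I_n -> R) (xs : 'I_n -> G)
    (x : G) : R :=
  \sum_(i < n | xs i == x) f i.

Lemma sum_hcomp (G : zmodType) (R : pzRingType) (n : nat) (f : 'I_n -> R) (xs : 'I_n -> G) :
  \sum_(x <- undup [seq xs i | i <- enum 'I_n]) hcomp f xs x = \sum_(i < n) f i.
Proof.
rewrite /hcomp; under eq_bigr do rewrite big_mkcond.
rewrite exchange_big /=; apply: eq_bigr => i _.
rewrite (bigD1_seq (xs i)) ?undup_uniq //=; last by rewrite mem_undup map_f ?mem_enum.
by rewrite eqxx big1 ?addr0 // => x; rewrite eq_sym => /negbTE ->.
Qed.

Section HomIdealR.
Variables (G : zmodType) (R : pzRingType) (Rx : G -> R -> Prop) (I : R -> Prop).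
Hypothesis I_ideal : isHomIdealR Rx I.

Lemma idealR0 : I 0.
Proof. by case: I_ideal. Qed.

Lemma idealRB r s : I r -> I s -> I (r - s).
Proof. by case: I_ideal => _ IB _ _ _; apply: IB. Qed.

Lemma idealRD r s : I r -> I s -> I (r + s).
Proof.
move=> Ir Is; have := idealRB Ir (idealRB idealR0 Is).
by rewrite sub0r opprK.
Qed.

Lemma idealR_sum (J : Type) (s : seq J) (P : pred J) (F : J -> R) :
  (forall j, P j -> I (F j)) -> I (\sum_(j <- s | P j) F j).
Proof. by move=> IF; apply: big_ind => //; [apply: idealR0 | apply: idealRD]. Qed.

Lemma idealR_mull a r : I r -> I (a * r).
Proof. by case: I_ideal => _ _ IM _ _; apply: IM. Qed.

Lemma idealR_mulr a r : I r -> I (r * a).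
Proof. by case: I_ideal => _ _ _ IM _; apply: IM. Qed.

Lemma idealR_homog r : I r -> exists n (f : 'I_n -> R),
  (forall i, homog Rx (f i) /\ I (f i)) /\ r = \sum_(i < n) f i.
Proof. by case: I_ideal => _ _ _ _; apply. Qed.

End HomIdealR.

Section Grading.
Variables (G : zmodType) (R : pzRingType) (Rx : G -> R -> Prop) (tau : G -> G -> R).
Hypothesis R_graded : gradedComRing Rx tau.

Lemma Rx0 x : Rx x 0.
Proof. by case: R_graded => [[]]. Qed.

Lemma RxB x r s : Rx x r -> Rx x s -> Rx x (r - s).
Proof. by case: R_graded => [[_ RB]] _ _ _ _; apply: RB. Qed.

Lemma RxN x r : Rx x r -> Rx x (- r).
Proof. by move=> xr; rewrite -sub0r; apply: RxB => //; apply: Rx0. Qed.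

Lemma RxD x r s : Rx x r -> Rx x s -> Rx x (r + s).
Proof. by move=> xr xs; rewrite -[s]opprK; apply: RxB => //; apply: RxN. Qed.

Lemma RxM x y r s : Rx x r -> Rx y s -> Rx (x + y) (r * s).
Proof. by case: R_graded => _ [_ RM] _ _ _; apply: RM. Qed.

Lemma RxM0 x r s : Rx x r -> Rx 0 s -> Rx x (r * s).
Proof. by move=> xr s0; have := RxM xr s0; rewrite addr0. Qed.

Lemma Rx_sum x (I : Type) (s : seq I) (P : pred I) (F : I -> R) :
  (forall i, P i -> Rx x (F i)) -> Rx x (\sum_(i <- s | P i) F i).
Proof. by move=> xF; apply: big_ind => //; [apply: Rx0 | apply: RxD]. Qed.

Lemma Rx_hcomp n (f : 'I_n -> R) xs x :
  (forall i, Rx (xs i) (f i)) -> Rx x (hcomp f xs x).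
Proof. by move=> xsf; apply: Rx_sum => i /eqP <-. Qed.

Lemma homog_decomp r : exists n (f : 'I_n -> R) (xs : 'I_n -> G),
  (forall i, Rx (xs i) (f i)) /\ r = \sum_(i < n) f i.
Proof.
case: R_graded => _ _ [decomp _] _ _; have [s [F [_ xF ->]]] := decomp r.
exists (size s), (fun i => F (nth 0 s i)), (fun i => nth 0 s i); split=> //.
by rewrite (big_nth 0) big_mkord.
Qed.

Lemma hcomp_eq0 n (f : 'I_n -> R) xs :
  (forall i, Rx (xs i) (f i)) -> \sum_(i < n) f i = 0 -> forall x, hcomp f xs x = 0.
Proof.
move=> xsf f0 x; case: R_graded => _ _ [_ direct] _ _.
case: (boolP (x \in undup [seq xs i | i <- enum 'I_n])) => [xs_x|].
  apply: (direct _ (hcomp f xs)) xs_x; first exact: undup_uniq.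
    by move=> y; apply: Rx_hcomp.
  by rewrite sum_hcomp.
rewrite mem_undup => /mapP xs_x; rewrite /hcomp big_pred0 // => i.
by apply/negbTE/eqP => xs_i; apply: xs_x; exists i; rewrite ?mem_enum.
Qed.

Lemma hcomp_unique n m (f : 'I_n -> R) xs (h : 'I_m -> R) ys :
  (forall i, Rx (xs i) (f i)) -> (forall j, Rx (ys j) (h j)) ->
  \sum_(i < n) f i = \sum_(j < m) h j -> forall x, hcomp f xs x = hcomp h ys x.
Proof.
move=> xsf ysh fh x.
pose fh' k := match split k with inl i => f i | inr j => - h j end.
pose xys k := match split k with inl i => xs i | inr j => ys j end.
have xys_fh' k : Rx (xys k) (fh' k).
  by rewrite /fh' /xys; case: split => [i|j]; [apply: xsf | apply: RxN].
have fh'0 : \sum_k fh' k = 0.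
  rewrite big_split_ord /fh' /=.
  under eq_bigr => i _ do rewrite (unsplitK (inl _ i)).
  under [X in _ + X]eq_bigr => j _ do rewrite (unsplitK (inr _ j)).
  by rewrite sumrN fh addrN.
have := hcomp_eq0 xys_fh' fh'0 x.
rewrite /hcomp big_split_ord /fh' /xys /=.
under eq_bigl => i do rewrite (unsplitK (inl _ i)).
under eq_bigr => i _ do rewrite (unsplitK (inl _ i)).
under [X in _ + X]eq_bigl => j do rewrite (unsplitK (inr _ j)).
under [X in _ + X]eq_bigr => j _ do rewrite (unsplitK (inr _ j)).
by rewrite sumrN => /eqP; rewrite subr_eq0 => /eqP.
Qed.

Lemma hcomp_homog n (f : 'I_n -> R) xs x r :
  (forall i, Rx (xs i) (f i)) -> Rx x r -> r = \sum_(i < n) f i -> r = hcomp f xs x.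
Proof.
move=> xsf xr rf.
have r1f : \sum_(j < 1) r = \sum_(i < n) f i by rewrite big_ord1.
have := hcomp_unique (fun _ : 'I_1 => xr) xsf r1f x.
by rewrite /hcomp big_mkcond big_ord1 eqxx.
Qed.

Lemma idealR_proper_homog (I : R -> Prop) :
  isHomIdealR Rx I -> (exists r, ~ I r) -> exists x q, Rx x q /\ ~ I q.
Proof.
move=> I_ideal [r Inr]; apply: NNPP => Ihomog; apply: Inr.
have [n [f [xs [xsf ->]]]] := homog_decomp r.
apply: (idealR_sum I_ideal) => i _.
by apply: NNPP => Infi; apply: Ihomog; exists (xs i), (f i).
Qed.

(** * Tightenings *)

Section Tightening.
Variables (C : twoRing) (pi : G -> K0 C) (g : K0 C -> Ob C)
  (phi : forall x : G, R -> Mor unito (g (pi x))).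
Hypothesis phi_tight : tightening Rx phi.
Local Notation ax := (tr_ax C).
Local Notation gx x := (g (pi x)).

Lemma pi_add x y : pi (x + y) = cls (gx x \otO gx y).
Proof. by case: phi_tight => [[]]. Qed.

Lemma pi_surj (c : K0 C) : exists x, pi x = c.
Proof. by case: phi_tight => [[_]]. Qed.

Lemma g_cls (c : K0 C) : cls (g c) = c.
Proof. by case: phi_tight => _ []. Qed.

Lemma g_cls_unit : g (cls unito) = unito.
Proof. by case: phi_tight => _ []. Qed.

Lemma phiD x r s : Rx x r -> Rx x s -> phi x (r + s) = phi x r + phi x s.
Proof. by case: phi_tight => _ _ [phiD _] _ _; apply: phiD. Qed.

Lemma phi_inj x r s : Rx x r -> Rx x s -> phi x r = phi x s -> r = s.
Proof. by case: phi_tight => _ _ [_ [phi_inj _]] _ _; apply: phi_inj. Qed.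

Lemma phi_surj x (f : Mor unito (gx x)) : exists r, Rx x r /\ phi x r = f.
Proof. by case: phi_tight => _ _ [_ [_ phi_surj]] _ _; apply: phi_surj. Qed.

Lemma phi_mul_deg0 (e : gx 0 = unito) x r s : Rx x r -> Rx 0 s ->
  phi x (r * s) = phi x r \oc eq_rect _ (fun o => Mor unito o) (phi 0 s) _ e.
Proof. by case: phi_tight => _ _ _ phiM _; apply: phiM. Qed.

Lemma phi_mul_translate x y r s : Rx x r -> Rx y s ->
  translate (phi (x + y) (r * s)) ((phi x r \ot idm (gx y)) \oc lami (gx y) \oc phi y s).
Proof. by case: phi_tight => _ _ _ _ phiM; apply: phiM. Qed.

Lemma phi0 x : phi x 0 = 0.
Proof. by apply: (addrI (phi x 0)); rewrite -phiD ?addr0 //; apply: Rx0. Qed.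

Lemma phiN x r : Rx x r -> phi x (- r) = - phi x r.
Proof.
move=> xr; apply/eqP; rewrite -addr_eq0 -phiD ?addNr ?phi0 //; exact: RxN.
Qed.

Lemma phiB x r s : Rx x r -> Rx x s -> phi x (r - s) = phi x r - phi x s.
Proof. by move=> xr xs; rewrite phiD ?phiN //; apply: RxN. Qed.

Lemma phi_sum x (I : Type) (s : seq I) (P : pred I) (F : I -> R) :
  (forall i, P i -> Rx x (F i)) ->
  phi x (\sum_(i <- s | P i) F i) = \sum_(i <- s | P i) phi x (F i).
Proof.
move=> xF; apply: (proj2 (big_ind2 (fun r f => Rx x r /\ phi x r = f) _ _ _)).
- by split; [apply: Rx0 | apply: phi0].
- by move=> r1 f1 r2 f2 [xr1 <-] [xr2 <-]; split; [apply: RxD | apply: phiD].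
- by move=> i Pi; split=> //; apply: xF.
Qed.

Lemma iso_g (b : Ob C) : exists y (k : Mor b (gx y)), isIso k.
Proof.
have [y yb] := pi_surj (cls b).
have [k [k' [k'k kk']]] : exists k : Mor (gx y) b, isIso k.
  by apply: cls_eq_iso; rewrite g_cls.
by exists y, k'; exists k.
Qed.

Lemma g_deg0 : gx 0 = unito.
Proof.
suff -> : pi 0 = cls unito by exact: g_cls_unit.
rewrite -(g_cls (pi 0)).
have [k [k' [k'k kk']]] : exists k : Mor (gx 0) (gx 0 \otO gx 0), isIso k.
  by apply: cls_eq_iso; rewrite -pi_add addr0 g_cls.
have [h' [u [u_iso _]]] := tensr_inverse_nat (gx 0).
have [e [ue eu]] := u_iso (gx 0).
apply: (@iso_cls_eq _ _ _ (u unito \oc ((lami (gx 0) \oc k') \ot idm h') \oc e)).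
apply: iso_comp; first by exists (u (gx 0)).
apply: (iso_comp _ (u_iso _)); apply: iso_tensm (iso_idm _).
by apply: (iso_comp _ (iso_lami _)); exists k.
Qed.

Lemma eq_rect_onto (o : Ob C) (e : o = unito) (nu : Mor unito unito) :
  exists f : Mor unito o, eq_rect o (fun o => Mor unito o) f unito e = nu.
Proof. by subst o; exists nu. Qed.

Lemma phi_comp_unit x r (nu : Mor unito unito) : Rx x r ->
  exists s, Rx 0 s /\ phi x r \oc nu = phi x (r * s).
Proof.
move=> xr; have [f fE] := eq_rect_onto g_deg0 nu.
have [s [s0 sE]] := phi_surj f.
by exists s; split=> //; rewrite (phi_mul_deg0 g_deg0 xr s0) sE fE.
Qed.

Lemma phi_comp_endo x p r (th : Mor (gx x) (gx x)) (nu : Mor unito unito) :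
  Rx x p -> Rx x r -> phi x r = th \oc phi x p \oc nu -> exists2 s, Rx 0 s & r = p * s.
Proof.
move=> xp xr; have [mu muE] := endo_unit th.
rewrite muE -compA; have [s [s0 ->]] := phi_comp_unit (mu \oc nu) xp.
by move=> /(phi_inj xr (RxM0 xp s0)) ->; exists s.
Qed.

Lemma hom_g_factor y x (psi : Mor (gx y) (gx x)) :
  exists z a, [/\ z + y = x, Rx z a, same_ideals psi (phi z a) &
    forall q, Rx y q -> exists (th : Mor (gx (z + y)) (gx x)) (nu : Mor unito unito),
      [/\ isIso th, isIso nu & psi \oc phi y q = th \oc phi (z + y) (a * q) \oc nu]].
Proof.
(* a is ψ read through g_z ⊗ g_y ≅ g_x and the fullness of - ⊗ g_y. *)
set z := x - y; have zy : z + y = x by rewrite /z subrK.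
have [k [k' [k'k kk']]] : exists k : Mor (gx z \otO gx y) (gx x), isIso k.
  by apply: cls_eq_iso; rewrite -pi_add zy g_cls.
have [b bE] := tensm1_surj (k' \oc psi \oc lam (gx y)).
have [a [za aE]] := phi_surj b.
exists z, a; split=> // [|q yq].
  apply: same_ideals_sym; rewrite aE.
  apply: same_ideals_trans (same_ideals_sym (same_ideals_tensm1 (gx y) b)) _.
  rewrite bE; apply: same_ideals_trans (same_ideals_isor _ (iso_lam _)) _.
  by apply: same_ideals_isol; exists k.
have [th [nu [th_iso nu_iso E]]] := translate_unitE (phi_mul_translate za yq).
exists (k \oc th), nu; split=> //; first by apply: (iso_comp th_iso); exists k'.
rewrite aE bE -(compA (lami (gx y))) (lam_lami ax) compm1 in E.
by rewrite -(compA _ th k) -(compA nu) -E !compA kk' comp1m.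
Qed.

Section PhiPreimage.
Variable I : R -> Prop.
Hypothesis I_ideal : isHomIdealR Rx I.

Lemma idealR_phi_compl y x r r' (psi : Mor (gx y) (gx x)) :
  Rx y r -> I r -> Rx x r' -> phi x r' = psi \oc phi y r -> I r'.
Proof.
move=> yr Ir xr'; have [z [a [zy za _ psiE]]] := hom_g_factor psi.
have [th [nu [_ _ ->]]] := psiE r yr.
(* z + y = x only propositionally: transport th along it to get an endomorphism of g_x. *)
move: th (RxM za yr); rewrite zy => th xar E.
have [s _ ->] := phi_comp_endo xar xr' E.
by apply: (idealR_mulr I_ideal); apply: (idealR_mull I_ideal).
Qed.

Lemma idealR_phi_sandwich y r x (h : Ob C) (u : Mor unito (h \otO unito))
    (v : Mor (h \otO gx y) (gx x)) r' :
  Rx y r -> I r -> Rx x r' -> phi x r' = v \oc (idm h \ot phi y r) \oc u -> I r'.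
Proof.
move=> yr Ir xr'; have [th [nu [_ -> _]]] := sandwich_unit (phi y r) u v.
rewrite -compA; have [s [s0 ->]] := phi_comp_unit nu yr.
by apply: (idealR_phi_compl (RxM0 yr s0)) => //; apply: (idealR_mulr I_ideal).
Qed.

(* The largest homogeneous ideal whose φ-preimage is contained in I. *)
Definition sandwichI : MorPred C := fun a b t =>
  forall x (h : Ob C) (u : Mor unito (h \otO a)) (v : Mor (h \otO b) (gx x)) r,
    Rx x r -> phi x r = v \oc (idm h \ot t) \oc u -> I r.

Lemma sandwichI_compl (a b c : Ob C) (f : Mor a b) (f' : Mor b c) :
  sandwichI f -> sandwichI (f' \oc f).
Proof.
move=> If x h u v r xr rE; apply: (If x h u (v \oc (idm h \ot f')) r xr).
by rewrite rE tensm1M !compA.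
Qed.

Lemma sandwichI_compr (a b c : Ob C) (f : Mor a b) (f' : Mor b c) :
  sandwichI f' -> sandwichI (f' \oc f).
Proof.
move=> If' x h u v r xr rE; apply: (If' x h ((idm h \ot f) \oc u) v r xr).
by rewrite rE tensm1M !compA.
Qed.

Lemma sandwichI_tensl (k a b : Ob C) (f : Mor a b) : sandwichI f -> sandwichI (idm k \ot f).
Proof.
move=> If x h u v r xr rE; have [al' [_ alal']] := alpha_iso ax h k a.
apply: (If x (h \otO k) (al' \oc u) (v \oc alpha h k b) r xr).
rewrite rE -tensm11 -(compA _ (alpha h k b) v) (alpha_nat ax).
by rewrite -!compA (compA u al') alal' comp1m.
Qed.

Lemma sandwichI_tensr (k a b : Ob C) (f : Mor a b) : sandwichI f -> sandwichI (f \ot idm k).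
Proof.
have -> : f \ot idm k = beta k b \oc (idm k \ot f) \oc beta a k.
  by rewrite (beta_nat ax) -compA (symmetry ax) compm1.
by move=> If; apply: sandwichI_compr; apply: sandwichI_compl; apply: sandwichI_tensl.
Qed.

Lemma sandwichI_ideal : isHomIdealC sandwichI.
Proof.
split.
- move=> a b x h u v r xr; rewrite tensm0r comp0r comp0l -(phi0 x).
  by move=> /(phi_inj xr (Rx0 x)) ->; apply: (idealR0 I_ideal).
- move=> a b f f' If If' x h u v r xr rE.
  have [r1 [xr1 r1E]] := phi_surj (v \oc (idm h \ot f) \oc u).
  have [r2 [xr2 r2E]] := phi_surj (v \oc (idm h \ot f') \oc u).
  have -> : r = r1 - r2.
    by apply: (phi_inj xr (RxB xr1 xr2)); rewrite phiB // r1E r2E rE tensmBr compBr compBl.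
  by apply: (idealRB I_ideal); [apply: (If x h u v r1) | apply: (If' x h u v r2)].
- by move=> *; apply: sandwichI_compl.
- by move=> *; apply: sandwichI_compr.
- by move=> k a b f If; split; [apply: sandwichI_tensl | apply: sandwichI_tensr].
Qed.

Lemma sandwichI_phi y r : Rx y r -> I r -> sandwichI (phi y r).
Proof. by move=> yr Ir x h u v r' xr'; apply: idealR_phi_sandwich. Qed.

Lemma sandwichI_phiK x r : Rx x r -> sandwichI (phi x r) -> I r.
Proof.
move=> xr /(_ x unito (lami unito) (lam (gx x)) r xr); apply.
by rewrite (lam_nat ax) -compA (lam_lami ax) compm1.
Qed.

Lemma eI_phiK x r : Rx x r -> eI Rx phi I (phi x r) -> I r.
Proof.
move=> xr eIr; apply: (sandwichI_phiK xr); apply: eIr; first exact: sandwichI_ideal.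
by move=> y q yq Iq; apply: sandwichI_phi.
Qed.

End PhiPreimage.

Lemma comp_normal_form (a b c : Ob C) (t : Mor a b) (s : Mor b c) :
  exists y q (c' : Ob C) (s' : Mor (gx y) c'), [/\ Rx y q, same_ideals t (phi y q),
    same_ideals s s' & same_ideals (s \oc t) (s' \oc phi y q)].
Proof.
have [a' [w [w' [w'w ww']]]] := all_invertible ax a.
have w'_iso : isIso w' by exists w.
have [y [k [k' [k'k kk']]]] := iso_g (b \otO a').
have k_iso : isIso k by exists k'.
have k'_iso : isIso k' by exists k.
have [q [yq qE]] := phi_surj (k \oc (t \ot idm a') \oc w').
exists y, q, (c \otO a'), ((s \ot idm a') \oc k'); split=> //.
- rewrite qE; apply: same_ideals_sym; apply: same_ideals_trans (same_ideals_isor _ w'_iso) _.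
  by apply: same_ideals_trans (same_ideals_isol _ k_iso) _; apply: same_ideals_tensm1.
- apply: same_ideals_sym; apply: same_ideals_trans (same_ideals_isor _ k'_iso) _.
  exact: same_ideals_tensm1.
- rewrite qE -!compA (compA _ k k') k'k comp1m compA -tensmM comp1m.
  apply: same_ideals_sym; apply: same_ideals_trans (same_ideals_isor _ w'_iso) _.
  exact: same_ideals_tensm1.
Qed.

Lemma same_ideals_phi (a b : Ob C) (t : Mor a b) :
  exists y q, Rx y q /\ same_ideals t (phi y q).
Proof. by have [y [q [_ [_ [yq tq _ _]]]]] := comp_normal_form t (idm b); exists y, q. Qed.

Lemma comp_same_ideals_phi (a b c : Ob C) (t : Mor a b) (s : Mor b c) :
  exists z y r q, [/\ Rx z r, Rx y q, same_ideals t (phi y q), same_ideals s (phi z r)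
    & same_ideals (s \oc t) (phi (z + y) (r * q))].
Proof.
have [y [q [c' [s' [yq tq ss' sts'q]]]]] := comp_normal_form t s.
have [x [k [k' [k'k kk']]]] := iso_g c'.
have k_iso : isIso k by exists k'.
have [z [r [_ zr ks'r ks'E]]] := hom_g_factor (k \oc s').
have [th [nu [th_iso nu_iso E]]] := ks'E q yq.
exists z, y, r, q; split=> //.
- apply: same_ideals_trans ss' _; apply: same_ideals_trans _ ks'r.
  exact: same_ideals_sym (same_ideals_isol _ k_iso).
- apply: same_ideals_trans sts'q _.
  apply: same_ideals_trans (same_ideals_sym (same_ideals_isol _ k_iso)) _.
  rewrite compA E; apply: same_ideals_trans (same_ideals_isor _ nu_iso) _.
  exact: same_ideals_isol.
Qed.

Section PhiIdeal.
Variable J : MorPred C.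
Hypothesis J_ideal : isHomIdealC J.

Lemma idealC_phi_mull x y r s : Rx x r -> Rx y s ->
  J (phi y s) -> J (phi (x + y) (r * s)).
Proof.
move=> xr ys Js; apply/(same_ideals_translate (phi_mul_translate xr ys) J_ideal).
exact: (idealC_compl J_ideal).
Qed.

Lemma idealC_phi_mulr x y r s : Rx x r -> Rx y s ->
  J (phi x r) -> J (phi (x + y) (r * s)).
Proof.
move=> xr ys Jr; apply/(same_ideals_translate (phi_mul_translate xr ys) J_ideal).
by apply: (idealC_compr J_ideal); apply: (idealC_compr J_ideal); apply: (idealC_tensr J_ideal).
Qed.

End PhiIdeal.

(** * Restriction and extension *)

Lemma rI_homog (J : MorPred C) x q : Rx x q -> J _ _ (phi x q) -> rI Rx phi J q.
Proof.
by move=> xq Jq; exists 1, (fun _ => q), (fun _ => x); split=> [//|]; rewrite big_ord1.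
Qed.

Lemma rI0 (J : MorPred C) : rI Rx phi J 0.
Proof. by exists 0, (fun _ => 0), (fun _ => 0); split; [case | rewrite big_ord0]. Qed.

Lemma rI_add (J : MorPred C) r s : rI Rx phi J r -> rI Rx phi J s -> rI Rx phi J (r + s).
Proof.
move=> [n [f [xs [xsJ ->]]]] [m [h [ys [ysJ ->]]]].
exists (n + m), (fun k => match split k with inl i => f i | inr j => h j end),
  (fun k => match split k with inl i => xs i | inr j => ys j end).
split=> [k|]; first by case: (split k).
rewrite big_split_ord /=; congr (_ + _); apply: eq_bigr => i _.
  by rewrite (unsplitK (inl _ i)).
by rewrite (unsplitK (inr _ i)).
Qed.

Lemma rI_sum (J : MorPred C) (I : Type) (s : seq I) (P : pred I) (F : I -> R) :
  (forall i, P i -> rI Rx phi J (F i)) -> rI Rx phi J (\sum_(i <- s | P i) F i).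
Proof. by move=> JF; apply: big_ind => //; [apply: rI0 | apply: rI_add]. Qed.

Lemma rI_subset (I J : MorPred C) : morIncl I J ->
  forall r, rI Rx phi I r -> rI Rx phi J r.
Proof.
move=> IJ r [n [f [xs [xsI rE]]]]; exists n, f, xs; split=> // i.
by have [xsf If] := xsI i; split=> //; apply: IJ.
Qed.

Lemma eI_phi (I : R -> Prop) x r : Rx x r -> I r -> eI Rx phi I (phi x r).
Proof. by move=> xr Ir J _; apply. Qed.

Lemma eI_subset (I J : R -> Prop) : (forall r, I r -> J r) ->
  morIncl (eI Rx phi I) (eI Rx phi J).
Proof.
by move=> IJ a b t It K K_ideal JK; apply: It => // x r xr /IJ; apply: JK.
Qed.

Lemma eI_ideal (I : R -> Prop) : isHomIdealC (eI Rx phi I).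
Proof.
split.
- by move=> a b J J_ideal _; apply: idealC0.
- move=> a b f f' If If' J J_ideal JI.
  by apply: (idealCB J_ideal); [apply: If | apply: If'].
- by move=> a b c f f' If J J_ideal JI; apply: (idealC_compl J_ideal); apply: If.
- by move=> a b c f f' If J J_ideal JI; apply: (idealC_compr J_ideal); apply: If.
- move=> h a b f If; split=> J J_ideal JI.
    by apply: (idealC_tensl J_ideal); apply: If.
  by apply: (idealC_tensr J_ideal); apply: If.
Qed.

Section Restriction.
Variable J : MorPred C.
Hypothesis J_ideal : isHomIdealC J.

Lemma phi_rI x r : Rx x r -> rI Rx phi J r -> J (phi x r).
Proof.
move=> xr [n [f [xs [xsJ rE]]]].
have xsf i : Rx (xs i) (f i) by case: (xsJ i).
rewrite (hcomp_homog xsf xr rE) /hcomp phi_sum => [|i /eqP <-]; last exact: xsf.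
by apply: (idealC_sum J_ideal) => i /eqP <-; case: (xsJ i).
Qed.

Lemma rI_hcomp r n (f : 'I_n -> R) xs x : rI Rx phi J r ->
  (forall i, Rx (xs i) (f i)) -> r = \sum_(i < n) f i -> rI Rx phi J (hcomp f xs x).
Proof.
move=> [m [h [ys [ysJ ->]]]] xsf /esym fh.
have ysh j : Rx (ys j) (h j) by case: (ysJ j).
rewrite (hcomp_unique xsf ysh fh x); apply: rI_sum => j _.
by case: (ysJ j) => ysh_j Jh; apply: rI_homog ysh_j Jh.
Qed.

Lemma rI_mull a r : rI Rx phi J r -> rI Rx phi J (a * r).
Proof.
move=> [n [f [xs [xsJ ->]]]]; have [m [F [zs [zsF ->]]]] := homog_decomp a.
rewrite mulr_suml; apply: rI_sum => j _; rewrite mulr_sumr; apply: rI_sum => i _.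
have [xsf Jf] := xsJ i.
by apply: (rI_homog (RxM (zsF j) xsf)); apply: idealC_phi_mull.
Qed.

Lemma rI_mulr a r : rI Rx phi J r -> rI Rx phi J (r * a).
Proof.
move=> [n [f [xs [xsJ ->]]]]; have [m [F [zs [zsF ->]]]] := homog_decomp a.
rewrite mulr_suml; apply: rI_sum => i _; rewrite mulr_sumr; apply: rI_sum => j _.
have [xsf Jf] := xsJ i.
by apply: (rI_homog (RxM xsf (zsF j))); apply: idealC_phi_mulr.
Qed.

Lemma rI_ideal : isHomIdealR Rx (rI Rx phi J).
Proof.
split.
- exact: rI0.
- move=> r s Jr [n [f [xs [xsJ ->]]]]; apply: rI_add => //.
  rewrite -sumrN; apply: rI_sum => i _; have [xsf Jf] := xsJ i.
  by apply: (rI_homog (RxN xsf)); rewrite (phiN xsf); apply: idealCN.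
- exact: rI_mull.
- exact: rI_mulr.
- move=> r [n [f [xs [xsJ rE]]]]; exists n, f; split=> // i.
  by have [xsf Jf] := xsJ i; split; [exists (xs i) | apply: rI_homog xsf Jf].
Qed.

Lemma eI_rI : eI Rx phi (rI Rx phi J) = J.
Proof.
apply: morIncl_antisym => a b t; first by apply; [exact: J_ideal | move=> x r; apply: phi_rI].
move=> Jt; have [y [q [yq tq]]] := same_ideals_phi t.
apply/(tq _ (eI_ideal _)); apply: (eI_phi yq); apply: (rI_homog yq).
exact/(tq _ J_ideal).
Qed.

End Restriction.

Lemma rI_eI (I : R -> Prop) : isHomIdealR Rx I -> rI Rx phi (eI Rx phi I) = I.
Proof.
move=> I_ideal; apply: subpred_antisym => r.
  move=> [n [f [xs [xsI ->]]]]; apply: (idealR_sum I_ideal) => i _.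
  by have [xsf If] := xsI i; apply: eI_phiK If.
move=> /(idealR_homog I_ideal) [n [f [fI ->]]].
have [xs xsf] := choice (fun i x => Rx x (f i)) (fun i => (fI i).1).
exists n, f, xs; split=> // i; split=> //.
by apply: eI_phi => //; case: (fI i).
Qed.

Lemma rI_prime (P : MorPred C) : isPrimeC P -> isHomPrimeR Rx (rI Rx phi P).
Proof.
case=> P_ideal [a [b [t Pnt]]] P_prime; split.
- exact: rI_ideal.
- have [y [q [yq tq]]] := same_ideals_phi t.
  by exists q => /(phi_rI P_ideal yq) /(tq _ P_ideal).
- move=> r s [x xr] [y ys] /(phi_rI P_ideal (RxM xr ys)).
  move=> /(same_ideals_translate (phi_mul_translate xr ys) P_ideal) /P_prime [Pr|Ps].
    left; apply: (rI_homog xr); apply: (idealC_tensr_cancel P_ideal (h := gx y)).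
    have := idealC_compr P_ideal (lam (gx y)) Pr.
    by rewrite -compA (lami_lam ax) compm1.
  by right; apply: (rI_homog ys).
Qed.

Lemma eI_prime (Q : R -> Prop) : isHomPrimeR Rx Q -> isPrimeC (eI Rx phi Q).
Proof.
case=> Q_ideal Q_proper Q_prime; split.
- exact: eI_ideal.
- have [x [q [xq Qnq]]] := idealR_proper_homog Q_ideal Q_proper.
  by exists unito, (gx x), (phi x q) => /(eI_phiK Q_ideal xq).
- move=> a b c t s.
  have [z [y [r [q [zr yq tq sr stE]]]]] := comp_same_ideals_phi t s.
  move=> /(stE _ (eI_ideal Q)) /(eI_phiK Q_ideal (RxM zr yq)).
  move=> /(Q_prime r q (ex_intro _ z zr) (ex_intro _ y yq)) [Qr|Qq].
    by left; apply/(sr _ (eI_ideal Q)); apply: eI_phi.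
  by right; apply/(tq _ (eI_ideal Q)); apply: eI_phi.
Qed.

Definition spc_to_spec (P : Spc C) : SpecH Rx :=
  exist _ (rI Rx phi (proj1_sig P)) (rI_prime (proj2_sig P)).

Definition spec_to_spc (Q : SpecH Rx) : Spc C :=
  exist _ (eI Rx phi (proj1_sig Q)) (eI_prime (proj2_sig Q)).

Lemma spc_to_specK : cancel spc_to_spec spec_to_spc.
Proof. by case=> P P_prime; apply: sig_inj; apply: eI_rI; case: P_prime. Qed.

Lemma spec_to_spcK : cancel spec_to_spc spc_to_spec.
Proof. by case=> Q Q_prime; apply: sig_inj; apply: rI_eI; case: Q_prime. Qed.

Definition hcomps (S : R -> Prop) : R -> Prop := fun q =>
  exists r n (f : 'I_n -> R) xs x,
    [/\ S r, forall i, Rx (xs i) (f i), r = \sum_(i < n) f i & q = hcomp f xs x].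

Lemma zariskiR_preimage (Z : SpecH Rx -> Prop) :
  zariskiR Z -> zariskiC (fun P => Z (spc_to_spec P)).
Proof.
move=> [S ZS]; exists (eI Rx phi (hcomps S)) => P; rewrite ZS /=.
have [P_ideal _ _] := proj2_sig P.
split=> [SP a b t|eIP r Sr].
  apply; first exact: P_ideal.
  move=> x q xq [r [n [f [xs [y [Sr xsf rE qE]]]]]]; subst q.
  by apply: (phi_rI P_ideal xq); apply: rI_hcomp (SP r Sr) xsf rE.
have [n [f [xs [xsf rE]]]] := homog_decomp r.
rewrite rE -(sum_hcomp f xs); apply: rI_sum => x _.
apply: (rI_homog (Rx_hcomp x xsf)); apply: eIP; apply: (eI_phi (Rx_hcomp x xsf)).
by exists r, n, f, xs, x.
Qed.

Lemma zariskiC_preimage (Z : Spc C -> Prop) :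
  zariskiC Z -> zariskiR (fun Q => Z (spec_to_spc Q)).
Proof.
move=> [S ZS].
exists (fun r => exists a b (t : Mor a b) x, [/\ S a b t, Rx x r & same_ideals t (phi x r)]).
move=> Q; rewrite ZS /=; have [Q_ideal _ _] := proj2_sig Q.
split=> [SeQ r [a [b [t [x [St xr tr]]]]]|SQ a b t St].
  by apply: (eI_phiK Q_ideal xr); apply/(tr _ (eI_ideal _)); apply: SeQ.
have [y [q [yq tq]]] := same_ideals_phi t.
by apply/(tq _ (eI_ideal _)); apply: (eI_phi yq); apply: SQ; exists a, b, t, y.
Qed.

End Tightening.
End Grading.

Theorem theoremA15 (C : twoRing) (G : zmodType) (R : pzRingType)
    (Rx : G -> R -> Prop) (tau : G -> G -> R)
    (pi : G -> K0 C) (g : K0 C -> Ob C)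
    (phi : forall x : G, R -> Mor unito (g (pi x))) :
  gradedComRing Rx tau ->
  @tightening C G R Rx pi g phi ->
  (forall I : MorPred C, isHomIdealC I -> isHomIdealR Rx (rI Rx phi I)) /\
  (forall I : R -> Prop, isHomIdealR Rx I -> isHomIdealC (eI Rx phi I)) /\
  (forall I : MorPred C, isHomIdealC I -> eI Rx phi (rI Rx phi I) = I) /\
  (forall I : R -> Prop, isHomIdealR Rx I -> rI Rx phi (eI Rx phi I) = I) /\
  (forall I J : MorPred C, isHomIdealC I -> isHomIdealC J -> morIncl I J ->
      forall r, rI Rx phi I r -> rI Rx phi J r) /\
  (forall I J : R -> Prop, isHomIdealR Rx I -> isHomIdealR Rx J ->
      (forall r, I r -> J r) -> morIncl (eI Rx phi I) (eI Rx phi J)) /\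
  (exists (f : Spc C -> SpecH Rx) (h : SpecH Rx -> Spc C),
        (forall P, proj1_sig (f P) = rI Rx phi (proj1_sig P)) /\
        (forall Q, proj1_sig (h Q) = eI Rx phi (proj1_sig Q)) /\
        [/\ cancel f h, cancel h f,
            continuous_gen (@zariskiC C) (@zariskiR G R Rx) f
          & continuous_gen (@zariskiR G R Rx) (@zariskiC C) h]).
Proof.
move=> R_graded phi_tight.
split; first by move=> I; apply: (rI_ideal R_graded phi_tight).
split; first by move=> I _; apply: eI_ideal.
split; first by move=> I; apply: (eI_rI R_graded phi_tight).
split; first by move=> I; apply: (rI_eI R_graded phi_tight).
split; first by move=> I J _ _; apply: rI_subset.
split; first by move=> I J _ _; apply: eI_subset.
exists (spc_to_spec R_graded phi_tight), (spec_to_spc R_graded phi_tight).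
do 2 split=> //; split.
- exact: spc_to_specK.
- exact: spec_to_spcK.
- exact/continuous_gen_basic/zariskiR_preimage.
- exact/continuous_gen_basic/zariskiC_preimage.
Qed.
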